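(* Let $\alpha=(\alpha_n)_{n\ge1}$ be a non-negative non-increasing null sequence with $\alpha_1\le1$, and let $\omega\in(0,1)$. The following are equivalent: (1) the principal Calkin space $\langle\alpha\rangle$ is stable; (2) $\alpha\otimes\alpha\in\langle\alpha\rangle$; (3) there exist $r\in\mathbb N$ and $C>0$ such that $\widetilde M^{(\omega)}_n(\alpha)\le C\,\widetilde K^{(\omega)}_{n+r}(\alpha)$ for every $n\in\mathbb N\cup\{0\}$.
   Context: $c_0$: complex null sequences; for $\beta\in c_0$, $\beta^\star$ is the non-increasing rearrangement of $(|\beta_n|)$. A Calkin space is a linear subspace $\mathfrak i\subseteq c_0$ such that $\gamma\in\mathfrak i,\beta\in c_0,\beta^\star\le\gamma^\star$ termwise imply $\beta\in\mathfrak i$. $\langle\alpha\rangle$ is the smallest Calkin space containing $\alpha$. For $\beta,\gamma\in c_0$, $\beta\otimes\gamma$ is the non-increasing rearrangement with multiplicities of $(|\beta_i\gamma_j|)_{i,j}$; a Calkin space $\mathfrak i$ is stable if the smallest Calkin space containing all $\beta\otimes\gamma$, $\beta,\gamma\in\mathfrak i$, equals $\mathfrak i$. For $n\ge0$: $K^{(\omega)}_n(\alpha)=|\{m:\omega^{n+1}<\alpha_m\le\omega^n\}|$, $\widetilde K^{(\omega)}_n(\alpha)=\sum_{i=0}^nK^{(\omega)}_i(\alpha)$, $M^{(\omega)}_n(\alpha)=\sum_{i+j=n}K^{(\omega)}_i(\alpha)K^{(\omega)}_j(\alpha)$, $\widetilde M^{(\omega)}_n(\alpha)=\sum_{i=0}^nM^{(\omega)}_i(\alpha)$.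 *)

From HB Require Import structures.
From mathcomp Require Import all_boot all_order all_algebra.
From mathcomp Require Import all_classical all_reals.
From mathcomp Require Import finmap.
From mathcomp.real_closed Require Import complex.
Set Implicit Arguments. Unset Strict Implicit. Unset Printing Implicit Defensive.
Import Order.TTheory GRing.Theory Num.Theory.
Local Open Scope ring_scope.
Local Open Scope classical_set_scope.

(* Complex sequences indexed by nat (index 0 = first term). *)
Section Defs.
Variable R : realType.
Local Notation C := (complex R).

Definition null_seq (b : nat -> C) : Prop :=
  forall e : R, 0 < e -> exists N : nat, forall n, (N <= n)%N -> Normc.normc (b n) < e.

(* non-increasing rearrangement (with multiplicity) of a non-negative family
   f indexed by T:  drearr f n = the (n+1)-th largest value of f (0-indexed),
   i.e. the supremum over all (n+1)-element sets of indices of the minimum of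
   f on that set. *)
Definition drearr (T : eqType) (f : T -> R) (n : nat) : R :=
  sup [set t : R | exists s : seq T,
        [/\ uniq s, size s = n.+1 & forall i, i \in s -> t <= f i]].

Definition rearr (b : nat -> C) : nat -> R := drearr (fun m => Normc.normc (b m)).

Definition cseq (a : nat -> R) : nat -> C := fun n => (a n)%:C%C.

Definition calkin (I : set (nat -> C)) : Prop :=
  [/\ I (fun _ => 0),
      (forall b g, I b -> I g -> I (fun n => b n + g n)),
      (forall (c : C) b, I b -> I (fun n => c * b n)),
      (forall b, I b -> null_seq b) &
      (forall g b, I g -> null_seq b -> (forall n, rearr b n <= rearr g n) -> I b)].

Definition calkin_hull (S : set (nat -> C)) : set (nat -> C) :=
  [set b | forall J, calkin J -> S `<=` J -> J b].

Definition principal (a : nat -> C) : set (nat -> C) := calkin_hull [set a].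

Definition tensor (b g : nat -> C) : nat -> R :=
  drearr (fun p : nat * nat => Normc.normc (b p.1) * Normc.normc (g p.2)).

Definition stable (I : set (nat -> C)) : Prop :=
  calkin_hull [set h | exists b g, [/\ I b, I g & h = cseq (tensor b g)]] = I.

Definition Kw (w : R) (a : nat -> R) (n : nat) : nat :=
  #|` fset_set [set m : nat | w ^+ n.+1 < a m <= w ^+ n] |.

Definition Kwt (w : R) (a : nat -> R) (n : nat) : nat :=
  \sum_(i < n.+1) Kw w a i.

Definition Mw (w : R) (a : nat -> R) (n : nat) : nat :=
  \sum_(i < n.+1) Kw w a i * Kw w a (n - i).

Definition Mwt (w : R) (a : nat -> R) (n : nat) : nat :=
  \sum_(i < n.+1) Mw w a i.
End Defs.

From HB Require Import structures.
From mathcomp Require Import all_boot all_order all_algebra.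
From mathcomp Require Import all_classical all_reals.
From mathcomp.real_closed Require Import complex.
From mathcomp Require Import finmap.
From mathcomp Require Import lra zify.
Import Order.TTheory GRing.Theory Num.Theory.
Local Open Scope ring_scope.
Local Open Scope classical_set_scope.
Set Implicit Arguments. Unset Strict Implicit. Unset Printing Implicit Defensive.

(* A sequence b lies in the principal Calkin space <a> iff its rearrangement
   is bounded by K * a (n / m) for some K > 0 and m > 0, i.e. by a multiple of
   a dilation of a.  Sorting indices by size shows that the tensor product of
   two such sequences is bounded by a dilation of a ⊗ a, so <a> is stable as
   soon as a ⊗ a ∈ <a>; conversely a = a ⊗ e_0 lies in the Calkin space
   generated by the tensor products.
   The pairs (i, j) with a_i a_j > w^(n+1) all lie in the blocks
   {w^(p+1) < a_i <= w^p} x {w^(q+1) < a_j <= w^q} with p + q <= n, which have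
   M~_n elements in total and on which a_i a_j > w^(n+2).  So (a ⊗ a)_k passes
   from above w^(n+2) to below w^(n+1) at k = M~_n, just as a_k passes w^(n+1)
   at k = K~_n, and a dilation bound for a ⊗ a amounts to M~_n <= C K~_(n+r). *)

Section Rearrangement.
Variables (R : realType) (T : eqType).
Implicit Types (f g : T -> R) (s : seq T).

(* For [0 <= t] and bounded [f], [t < drearr f n] iff [exceeds f t n]. *)
Definition exceeds f (t : R) (n : nat) : Prop :=
  exists s, [/\ uniq s, size s = n.+1 & forall i, i \in s -> t < f i].

Lemma exceeds_leq f t n k : (k <= n)%N -> exceeds f t n -> exceeds f t k.
Proof.
move=> kn [s [us ss Hs]]; exists (take k.+1 s); split.
- exact: take_uniq.
- by rewrite size_take ss ltnS; case: ltngtP kn => // ->.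
- by move=> i /mem_take; apply: Hs.
Qed.

Lemma exceeds_impl f g t t' n :
  (forall i, t < f i -> t' < g i) -> exceeds f t n -> exceeds g t' n.
Proof. by move=> fg [s [us ss Hs]]; exists s; split => // i /Hs /fg. Qed.

Lemma exceeds_split f g1 g2 t n : (forall i, f i <= g1 i + g2 i) ->
  exceeds f t n -> exceeds g1 (t / 2) n./2 \/ exceeds g2 (t / 2) n./2.
Proof.
move=> fg [s [us ss Hs]].
pose p1 i := t / 2 < g1 i; pose p2 i := t / 2 < g2 i.
have cover : (size s <= count p1 s + count p2 s)%N.
  rewrite -count_predUI -[size s]count_predT.
  apply: leq_trans (leq_addr _ _); rewrite leq_eqVlt; apply/orP; left.
  apply/eqP/eq_in_count => i /Hs ti /=; apply/esym/orP; rewrite /p1 /p2.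
  case: (ltrP (t / 2) (g1 i)) => h1; [by left | right].
  by move: (lt_le_trans ti (fg i)) => h; lra.
have half : (n./2 + n./2 <= n)%N by rewrite addnn -{2}(odd_double_half n) leq_addl.
have filter_exceeds p : (n./2 < count p s)%N ->
    exists s', [/\ uniq s', size s' = n./2.+1 & forall i, i \in s' -> p i].
  move=> cp; exists (take n./2.+1 (seq.filter p s)); split.
  - exact/take_uniq/filter_uniq.
  - by rewrite size_take size_filter; case: ifP => // /negbT; lia.
  - by move=> i /mem_take; rewrite mem_filter => /andP[].
have [c1|c1] := ltnP n./2 (count p1 s); first by left; apply: (filter_exceeds p1).
by right; apply: (filter_exceeds p2); lia.
Qed.

Lemma strict_lb_seq f t s : (forall i, i \in s -> t < f i) ->
  exists2 x, t < x & forall i, i \in s -> x <= f i.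
Proof.
elim: s => [|j s IH] H; first by exists (t + 1) => //; rewrite ltrDl ltr01.
have [|x tx Hx] := IH; first by move=> i iS; apply: H; rewrite inE iS orbT.
exists (Num.min x (f j)); first by rewrite lt_min tx H // inE eqxx.
move=> i; rewrite inE => /orP[/eqP->|iS]; first by rewrite ge_min lexx orbT.
by rewrite ge_min Hx.
Qed.

Lemma drearr_gt_exceeds f t n : 0 <= t -> t < drearr f n -> exceeds f t n.
Proof.
move=> t0; rewrite /drearr; set E := [set _ | _] => tE.
have [hs|nhs] := pselect (has_sup E); last first.
  by move: (le_lt_trans t0 tE); rewrite sup_out // ltxx.
have tE' : 0 < sup E - t by rewrite subr_gt0.
have [e [s [us ss Hs]] He] := sup_adherent tE' hs.
rewrite opprB addrCA subrr addr0 in He.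
by exists s; split => // i /Hs; apply: lt_le_trans.
Qed.

Lemma drearr_le f n y : 0 <= y -> ~ exceeds f y n -> drearr f n <= y.
Proof. by move=> y0 nP; rewrite leNgt; apply/negP => /(drearr_gt_exceeds y0). Qed.

Lemma drearr_ge0 f n : (forall i, 0 <= f i) -> 0 <= drearr f n.
Proof.
move=> f0; rewrite /drearr; set E := [set _ | _].
have [hs|nhs] := pselect (has_sup E); last by rewrite sup_out.
have [[x [s [us ss _]]] _] := hs.
by apply: sup_upper_bound => //; exists s; split.
Qed.

Section Bounded.
Variables (f : T -> R) (B : R).
Hypothesis fB : forall i, f i <= B.

Lemma drearr_ge_seq n s x : uniq s -> size s = n.+1 ->
  (forall i, i \in s -> x <= f i) -> x <= drearr f n.
Proof.
move=> us ss Hs; rewrite /drearr; set E := [set _ | _].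
have hs : has_sup E.
  split; first by exists x, s.
  exists B => y [[|i s'] [_ //= _ Hs']].
  by apply: le_trans (fB i); apply: Hs'; rewrite inE eqxx.
by apply: sup_upper_bound => //; exists s.
Qed.

Lemma exceeds_drearr_gt t n : exceeds f t n -> t < drearr f n.
Proof.
move=> [s [us ss /strict_lb_seq [x tx Hx]]].
exact: lt_le_trans tx (drearr_ge_seq us ss Hx).
Qed.

Lemma drearr_antimono (f0 : forall i, 0 <= f i) : {homo drearr f : n m / (n <= m)%N >-> m <= n}.
Proof.
move=> n m nm; apply: drearr_le; first exact: drearr_ge0.
by move=> /(exceeds_leq nm) /exceeds_drearr_gt; rewrite ltxx.
Qed.

Lemma drearr_ge_sorted (L : seq T) i : uniq L ->
  sorted (fun i j => f j <= f i) L -> i \in L -> f i <= drearr f (index i L).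
Proof.
move=> uL sL iL; have il : (index i L < size L)%N by rewrite index_mem.
have trans : transitive (fun i j => f j <= f i) by move=> y x z h1 h2; apply: le_trans h2 h1.
apply: (@drearr_ge_seq _ (take (index i L).+1 L)).
- exact: take_uniq.
- by rewrite size_take_min; apply/minn_idPl.
move=> x /(nthP i) [l]; rewrite size_take_min (minn_idPl il) => lt <-.
rewrite nth_take //; have := sorted_leq_nth trans (fun x => lexx (f x)) i sL.
by move=> /(_ l (index i L)); rewrite nth_index //; apply; rewrite ?inE // (leq_trans lt il).
Qed.

End Bounded.

Lemma drearr_ub f B n : 0 <= B -> (forall i, f i <= B) -> drearr f n <= B.
Proof.
move=> B0 fB; apply: drearr_le => // -[[|i s] [_ //= _ /(_ i)]].
by rewrite inE eqxx => /(_ isT); rewrite ltNge fB.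
Qed.
End Rearrangement.

Lemma uniq_has_geq (s : seq nat) n : uniq s -> size s = n.+1 ->
  exists2 i, i \in s & (n <= i)%N.
Proof.
move=> us ss; apply/hasP; apply: contraT => /hasPn small.
have : {subset s <= iota 0 n} by move=> i /small; rewrite -ltnNge mem_iota.
by move=> /(uniq_leq_size us); rewrite size_iota ss ltnn.
Qed.

Lemma drearr_nonincr (R : realType) (x : nat -> R) n :
  (forall n, 0 <= x n) -> {homo x : n m / (n <= m)%N >-> m <= n} ->
  drearr x n = x n.
Proof.
move=> x0 xd; apply/le_anti/andP; split.
  apply: drearr_le => // -[s [us ss Hs]].
  have [i iS ni] := uniq_has_geq us ss.
  by move: (Hs i iS); rewrite ltNge xd.
apply: (@drearr_ge_seq _ _ _ (x 0%N) (fun i => xd _ _ (leq0n i)) _ (iota 0 n.+1)).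
- exact: iota_uniq.
- by rewrite size_iota.
- by move=> i; rewrite mem_iota ltnS => /xd.
Qed.

Section Calkin.
Variable R : realType.
Local Notation C := (complex R).
Local Notation nc := (@Normc.normc R).
Implicit Types (b g : nat -> C) (S J : set (nat -> C)).

Lemma nc_ge0 (z : C) : 0 <= nc z.
Proof. by case: z => u v; rewrite /Normc.normc sqrtr_ge0. Qed.

Lemma nc_real (x : R) : nc x%:C%C = `|x|.
Proof. by rewrite /Normc.normc /= expr0n /= addr0 sqrtr_sqr. Qed.

Lemma nc_cseq (x : nat -> R) n : 0 <= x n -> nc (cseq x n) = x n.
Proof. by move=> x0; rewrite /cseq nc_real ger0_norm. Qed.

Lemma null_bounded b : null_seq b -> exists2 B, 0 <= B & forall n, nc (b n) <= B.
Proof.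
move=> /(_ 1 ltr01) [N HN].
have s0 : 0 <= \sum_(k < N) nc (b k) by rewrite sumr_ge0 // => k _; apply: nc_ge0.
exists (1 + \sum_(k < N) nc (b k)); first by rewrite addr_ge0.
move=> n; case: (ltnP n N) => [nN|Nn].
  rewrite (bigD1 (Ordinal nN)) //= addrCA lerDl addr_ge0 //.
  by rewrite sumr_ge0 // => k _; apply: nc_ge0.
by apply: le_trans (ltW (HN n Nn)) _; rewrite lerDl.
Qed.

Lemma rearr_cseq (x : nat -> R) n :
  (forall n, 0 <= x n) -> {homo x : n m / (n <= m)%N >-> m <= n} ->
  rearr (cseq x) n = x n.
Proof.
move=> x0 xd; rewrite -[RHS](drearr_nonincr n x0 xd) /rearr.
by congr drearr; apply: funext => m; apply: nc_cseq.
Qed.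

Lemma exceeds_rearr_gt b t n :
  null_seq b -> exceeds (fun i => nc (b i)) t n -> t < rearr b n.
Proof. by move=> /null_bounded [B _ HB]; apply: exceeds_drearr_gt. Qed.

Lemma calkin_null : calkin (@null_seq R).
Proof.
split => //.
- by move=> e e0; exists 0%N => n _; rewrite Normc.normc0.
- move=> b g nb ng e e0.
  have [N1 H1] := nb (e / 2) (divr_gt0 e0 (ltr0Sn _ 1)).
  have [N2 H2] := ng (e / 2) (divr_gt0 e0 (ltr0Sn _ 1)).
  exists (maxn N1 N2) => n hn; apply: le_lt_trans (le_normcD _ _) _.
  by rewrite (splitr e) ltrD //; [apply: H1 | apply: H2]; lia.
- move=> c b nb e e0.
  have c1 : 0 < nc c + 1 by rewrite ltr_wpDl ?nc_ge0.
  have [N H] := nb (e / (nc c + 1)) (divr_gt0 e0 c1).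
  exists N => n /H; rewrite Normc.normcM ltr_pdivlMr // mulrC; apply: le_lt_trans.
  by rewrite ler_wpM2r ?nc_ge0 // lerDl.
Qed.

Lemma hull_sub S : S `<=` calkin_hull S.
Proof. by move=> x Sx J _ /(_ x Sx). Qed.

Lemma hull_min S J : calkin J -> S `<=` J -> calkin_hull S `<=` J.
Proof. by move=> cJ SJ x /(_ J cJ SJ). Qed.

Lemma hull_calkin S : S `<=` @null_seq R -> calkin (calkin_hull S).
Proof.
move=> SN; split.
- by move=> J [].
- move=> b g Hb Hg J cJ SJ; case: (cJ) => _ Hadd _ _ _.
  by apply: Hadd; [apply: Hb | apply: Hg].
- by move=> c b Hb J cJ SJ; case: (cJ) => _ _ Hsc _ _; apply: Hsc; apply: Hb.
- by move=> b /(_ _ calkin_null SN).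
- move=> g b Hg nb Hbg J cJ SJ; case: (cJ) => _ _ _ _ Hsol.
  by apply: (Hsol g) => //; apply: Hg.
Qed.

End Calkin.

Lemma size_le_undup_divn (s : seq (nat * nat)) m1 m2 : (0 < m1)%N -> (0 < m2)%N ->
  uniq s -> (size s <= size (undup [seq (p.1 %/ m1, p.2 %/ m2) | p <- s]) * (m1 * m2))%N.
Proof.
move=> m10 m20 us; set s' := undup _.
pose U := [seq (u, v) | u <- iota 0 m1, v <- iota 0 m2].
pose L := [seq (q.1 * m1 + u.1, q.2 * m2 + u.2)%N | q <- s', u <- U].
have -> : (size s' * (m1 * m2) = size L)%N by rewrite !size_allpairs !size_iota.
apply: uniq_leq_size => // p ps; apply/allpairsP.
exists ((p.1 %/ m1, p.2 %/ m2), (p.1 %% m1, p.2 %% m2))%N => /=; split.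
- by rewrite mem_undup; apply: map_f.
- by apply/allpairsP; exists (p.1 %% m1, p.2 %% m2)%N; rewrite !mem_iota !ltn_pmod.
- by rewrite -!divn_eq; case: p {ps}.
Qed.

Section Tensor.
Variable R : realType.
Local Notation C := (complex R).
Local Notation nc := (@Normc.normc R).
Implicit Types (b g : nat -> C).

Definition tensor_fun b g (p : nat * nat) : R := nc (b p.1) * nc (g p.2).

Lemma tensor_fun_bounded b g : null_seq b -> null_seq g ->
  exists2 B, 0 <= B & forall p, tensor_fun b g p <= B.
Proof.
move=> /null_bounded [B1 B10 H1] /null_bounded [B2 B20 H2].
by exists (B1 * B2); rewrite ?mulr_ge0 // => p; rewrite ler_pM ?nc_ge0.
Qed.

Lemma tensor_ge0 b g n : 0 <= tensor b g n.
Proof. by apply: drearr_ge0 => p; rewrite mulr_ge0 ?nc_ge0. Qed.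

Lemma rearr_tensor b g n : null_seq b -> null_seq g ->
  rearr (cseq (tensor b g)) n = tensor b g n.
Proof.
move=> nb ng; apply: rearr_cseq => [k|]; first exact: tensor_ge0.
have [B _ HB] := tensor_fun_bounded nb ng.
by apply: (drearr_antimono HB) => p; rewrite mulr_ge0 ?nc_ge0.
Qed.

Lemma exists_rank b (s : seq nat) : null_seq b -> exists rk : nat -> nat,
  {in s &, injective rk} /\ forall i, i \in s -> nc (b i) <= rearr b (rk i).
Proof.
move=> /null_bounded [B _ HB].
pose L := sort (fun i j => nc (b j) <= nc (b i)) (undup s).
have inL i : i \in s -> i \in L by rewrite mem_sort mem_undup.
exists (index^~ L); split.
  by move=> i j /inL iL /inL jL /(congr1 (nth 0%N L)); rewrite !nth_index.
move=> i /inL iL; apply: (drearr_ge_sorted HB) => //; first by rewrite sort_uniq undup_uniq.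
by apply: sort_sorted => x y; apply: le_total.
Qed.

Definition unit_seq : nat -> C := cseq (fun n => (n == 0%N)%:R).

Lemma null_unit_seq : null_seq unit_seq.
Proof.
move=> e e0; exists 1%N => -[|n] //= _.
by rewrite expr0n /= addr0 sqrtr0.
Qed.

Lemma rearr_le_tensor_unit b n : null_seq b -> rearr b n <= tensor b unit_seq n.
Proof.
move=> nb; have [B _ HB] := tensor_fun_bounded nb null_unit_seq.
rewrite leNgt; apply/negP => /(drearr_gt_exceeds (tensor_ge0 _ _ _)) P.
have : exceeds (tensor_fun b unit_seq) (tensor b unit_seq n) n.
  have [s [us ss Hs]] := P; exists [seq (i, 0%N) | i <- s]; split.
  - by rewrite map_inj_uniq // => i j [].
  - by rewrite size_map.
  - by move=> _ /mapP [i /Hs iS ->]; rewrite /tensor_fun /unit_seq nc_cseq //= mulr1.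
by move=> /(exceeds_drearr_gt HB); rewrite ltxx.
Qed.

Lemma stable_tensor (I : set (nat -> C)) b g :
  stable I -> I b -> I g -> I (cseq (tensor b g)).
Proof. by move=> st Ib Ig; rewrite -st; apply: hull_sub; exists b, g. Qed.

End Tensor.
Arguments unit_seq {R}.

Section Dominated.
Variable R : realType.
Local Notation C := (complex R).
Local Notation nc := (@Normc.normc R).
Implicit Types (b g : nat -> C).
Variable a : nat -> R.
Hypothesis a_ge0 : forall n, 0 <= a n.
Hypothesis a_nonincr : {homo a : n m / (n <= m)%N >-> m <= n}.
Hypothesis a_null : forall e : R, 0 < e -> exists N : nat, forall n, (N <= n)%N -> a n < e.

Lemma null_seq_dominated b m K : (0 < m)%N -> 0 < K ->
  (forall n, nc (b n) <= K * a (n %/ m)) -> null_seq b.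
Proof.
move=> m0 K0 Hb e e0; have [N HN] := a_null (divr_gt0 e0 K0).
exists (N * m)%N => n Nn; apply: le_lt_trans (Hb n) _.
have /HN : (N <= n %/ m)%N by rewrite leq_divRL.
by rewrite ltr_pdivlMr // mulrC.
Qed.

Lemma null_a : null_seq (cseq a).
Proof.
by apply: (@null_seq_dominated _ 1%N 1) => // n; rewrite nc_cseq // mul1r divn1.
Qed.

(* Sorting indices by the size of [b] and of [g] turns the pairs where [b ⊗ g]
   is large into distinct pairs of ranks; dividing the ranks by [m1] and [m2]
   loses at most a factor [m1 * m2] of them. *)
Lemma tensor_bound b g m1 m2 K1 K2 : null_seq b -> null_seq g ->
  (0 < m1)%N -> (0 < m2)%N -> 0 < K1 -> 0 < K2 ->
  (forall k, rearr b k <= K1 * a (k %/ m1)) ->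
  (forall k, rearr g k <= K2 * a (k %/ m2)) ->
  forall n, tensor b g n <= K1 * K2 * tensor (cseq a) (cseq a) (n %/ (m1 * m2)).
Proof.
move=> nb ng m10 m20 K10 K20 Hb Hg n; set T := tensor (cseq a) _ _.
apply: drearr_le => [|[s [us ss Hs]]]; first by rewrite !mulr_ge0 ?tensor_ge0 // ltW.
have [rk1 [inj1 Hrk1]] := exists_rank (map fst s) nb.
have [rk2 [inj2 Hrk2]] := exists_rank (map snd s) ng.
pose psi p := (rk1 p.1, rk2 p.2).
have ups : uniq (map psi s).
  rewrite map_inj_in_uniq // => p q ps qs [e1 e2].
  have := inj1 _ _ (map_f fst ps) (map_f fst qs) e1.
  have := inj2 _ _ (map_f snd ps) (map_f snd qs) e2.
  by case: p q {ps qs e1 e2} => [? ?] [? ?] /= -> ->.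
set s' := undup [seq (q.1 %/ m1, q.2 %/ m2)%N | q <- map psi s].
have T_lt q : q \in s' -> T < tensor_fun (cseq a) (cseq a) q.
  rewrite mem_undup => /mapP [_ /mapP [p ps ->] ->]; rewrite /tensor_fun !nc_cseq //=.
  have hb := le_trans (Hrk1 _ (map_f fst ps)) (Hb _).
  have hg := le_trans (Hrk2 _ (map_f snd ps)) (Hg _).
  have := lt_le_trans (Hs p ps) (ler_pM (nc_ge0 _) (nc_ge0 _) hb hg).
  by rewrite mulrACA ltr_pM2l ?mulr_gt0.
have size_s' : (n %/ (m1 * m2) < size s')%N.
  rewrite ltn_divLR ?muln_gt0 ?m10 // -ss -(size_map psi).
  exact: size_le_undup_divn.
have [B _ HB] := tensor_fun_bounded null_a null_a.
suff : exceeds (tensor_fun (cseq a) (cseq a)) T (n %/ (m1 * m2)).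
  by move=> /(exceeds_drearr_gt HB); rewrite ltxx.
exists (take (n %/ (m1 * m2)).+1 s'); split.
- exact/take_uniq/undup_uniq.
- by rewrite size_take_min; apply/minn_idPl.
- by move=> q /mem_take /T_lt.
Qed.

(* [b^* <= K D_m a] for the [m]-fold dilation [D_m a = (a (n %/ m))_n]; by
   [principal_dominated] these are exactly the elements of [<a>]. *)
Definition dominated b := null_seq b /\
  exists m K, [/\ (0 < m)%N, 0 < K & forall n, rearr b n <= K * a (n %/ m)].

Lemma dominated0 : dominated (fun _ => 0).
Proof.
split; first by case: (calkin_null R).
exists 1%N, 1; split => // n; rewrite mul1r; apply: le_trans (a_ge0 _).
by apply: drearr_ub => // i; rewrite Normc.normc0.
Qed.

Lemma dominatedD b g : dominated b -> dominated g -> dominated (fun n => b n + g n).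
Proof.
move=> [nb [m1 [K1 [m10 K10 Hb]]]] [ng [m2 [K2 [m20 K20 Hg]]]].
split; first by case: (calkin_null R) => _ + _ _ _; apply.
exists (2 * (m1 * m2))%N, (2 * (K1 + K2)); split.
- by rewrite !muln_gt0 m10 m20.
- by rewrite mulr_gt0 // addr_gt0.
move=> n; rewrite divnMA divn2; set A := a (n./2 %/ (m1 * m2)).
have A0 : 0 <= A by apply: a_ge0.
have le_A c K m : null_seq c -> 0 < K -> K <= K1 + K2 -> (0 < m)%N -> (m <= m1 * m2)%N ->
    (forall k, rearr c k <= K * a (k %/ m)) -> rearr c n./2 <= (K1 + K2) * A.
  move=> nc0 K0 KK m0 mm Hc; apply: le_trans (Hc _) _.
  by apply: ler_pM => //; [exact: ltW | apply: a_nonincr; rewrite leq_div2l].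
have y0 : 0 <= 2 * (K1 + K2) * A by rewrite !mulr_ge0 // addr_ge0 // ltW.
apply: drearr_le => // /(@exceeds_split _ _ _ (fun i => nc (b i)) (fun i => nc (g i))).
move=> /(_ (fun i => le_normcD (b i) (g i))) [/(exceeds_rearr_gt nb) | /(exceeds_rearr_gt ng)].
- have KK : K1 <= K1 + K2 by rewrite lerDl ltW.
  have := le_A b K1 m1 nb K10 KK m10 (leq_pmulr _ m20) Hb; lra.
- have KK : K2 <= K1 + K2 by rewrite lerDr ltW.
  have := le_A g K2 m2 ng K20 KK m20 (leq_pmull _ m10) Hg; lra.
Qed.

Lemma dominatedZ (c : C) b : dominated b -> dominated (fun n => c * b n).
Proof.
move=> [nb [m [K [m0 K0 Hb]]]].
split; first by case: (calkin_null R) => _ _ + _ _; apply.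
have c1 : 0 < nc c + 1 by rewrite ltr_wpDl ?nc_ge0.
exists m, ((nc c + 1) * K); split; rewrite ?mulr_gt0 // => n.
apply: drearr_le => [|P]; first by rewrite !mulr_ge0 ?a_ge0 ?ltW.
suff /(exceeds_rearr_gt nb) : exceeds (fun i => nc (b i)) (K * a (n %/ m)) n.
  by rewrite ltNge Hb.
apply: (exceeds_impl _ P) => i; rewrite Normc.normcM -mulrA => /lt_le_trans h.
by rewrite -(ltr_pM2l c1); apply: h; rewrite ler_wpM2r ?nc_ge0 // lerDl.
Qed.

Lemma calkin_dominated : calkin dominated.
Proof.
split.
- exact: dominated0.
- exact: dominatedD.
- exact: dominatedZ.
- by move=> b [].
- move=> g b [_ [m [K [m0 K0 Hg]]]] nb Hbg; split => //.
  by exists m, K; split => // n; apply: le_trans (Hbg n) (Hg n).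
Qed.

Lemma dominated_a : dominated (cseq a).
Proof.
split; first exact: null_a.
by exists 1%N, 1; split => // n; rewrite mul1r divn1 rearr_cseq.
Qed.

(* The part of [K D_m a] on the residue class [k] modulo [m]; it is
   rearrangement-dominated by [K a], and the [m] pieces sum to [K D_m a]. *)
Definition dilate_piece m K k : nat -> C :=
  fun n => if (n %% m == k)%N then (K * a (n %/ m))%:C%C else 0.

Lemma nc_dilate_piece m K k n : 0 <= K ->
  nc (dilate_piece m K k n) = if (n %% m == k)%N then K * a (n %/ m) else 0.
Proof.
move=> K0; rewrite /dilate_piece; case: ifP => _; last exact: Normc.normc0.
by rewrite nc_real ger0_norm // mulr_ge0.
Qed.

Lemma rearr_dilate_piece m K k n : 0 < K -> rearr (dilate_piece m K k) n <= K * a n.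
Proof.
move=> K0; have Kan0 : 0 <= K * a n by rewrite mulr_ge0 ?a_ge0 ?ltW.
apply: drearr_le => // -[s [us ss Hs]].
have Hs' i : i \in s -> (i %% m == k)%N /\ K * a n < K * a (i %/ m).
  move=> /Hs; rewrite nc_dilate_piece ?ltW //.
  by case: ifP => // _; rewrite ltNge Kan0.
have inj : {in s &, injective (fun i => i %/ m)%N}.
  move=> i j /Hs' [/eqP hi _] /Hs' [/eqP hj _] e.
  by rewrite (divn_eq i m) (divn_eq j m) e hi hj.
have uq : uniq (map (fun i => i %/ m)%N s) by rewrite map_inj_in_uniq.
have [j /mapP [i iS ->] ni] := uniq_has_geq uq (etrans (size_map _ _) ss).
have [_] := Hs' i iS; rewrite ltr_pM2l // => /lt_le_trans /(_ (a_nonincr ni)).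
by rewrite ltxx.
Qed.

Lemma dilate_piece_in J m K k : calkin J -> J (cseq a) -> (0 < m)%N -> 0 < K ->
  J (dilate_piece m K k).
Proof.
move=> cJ Ja m0 K0; case: (cJ) => _ _ Hsc _ Hsol.
have ncK n : nc (K%:C%C * cseq a n) = K * a n.
  by rewrite Normc.normcM nc_real nc_cseq // ger0_norm // ltW.
apply: (Hsol _ _ (Hsc K%:C%C _ Ja)) => [|n].
  apply: (null_seq_dominated m0 K0) => n; rewrite nc_dilate_piece ?(ltW K0) //.
  by case: ifP => _; rewrite ?lexx // mulr_ge0 ?a_ge0 ?(ltW K0).
have -> : rearr (fun n => K%:C%C * cseq a n) n = K * a n.
  rewrite /rearr (funext ncK) drearr_nonincr // => [i|i j ij].
    by rewrite mulr_ge0 ?a_ge0 ?(ltW K0).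
  by rewrite ler_wpM2l ?(ltW K0) ?a_nonincr.
exact: rearr_dilate_piece.
Qed.

Lemma dominated_in J b : calkin J -> J (cseq a) -> dominated b -> J b.
Proof.
move=> cJ Ja [nb [m [K [m0 K0 Hb]]]]; case: (cJ) => J0 Hadd _ _ Hsol.
pose D j n := \sum_(k < j) dilate_piece m K k n.
have JD j : J (D j).
  elim: j => [|j IH]; first by rewrite /D; under eq_fun do rewrite big_ord0.
  rewrite /D; under eq_fun do rewrite big_ord_recr /=.
  by apply: Hadd => //; apply: dilate_piece_in.
have ncD i : nc (D m i) = K * a (i %/ m).
  rewrite /D (bigD1 (Ordinal (ltn_pmod i m0))) //= big1 ?addr0.
    by rewrite nc_dilate_piece ?(ltW K0) // eqxx.
  move=> k /negPf kn; rewrite /dilate_piece ifF //; apply: contraFF kn => /eqP e.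
  by apply/eqP/val_inj.
apply: (Hsol _ _ (JD m)) => // n; apply: le_trans (Hb n) _.
rewrite /rearr (funext ncD) drearr_nonincr // => [i|i j ij].
  by rewrite mulr_ge0 ?a_ge0 ?(ltW K0).
by rewrite ler_wpM2l ?(ltW K0) ?a_nonincr ?leq_div2r.
Qed.

Lemma principal_dominated b : principal (cseq a) b <-> dominated b.
Proof.
split; first by apply; [exact: calkin_dominated | move=> _ ->; exact: dominated_a].
by move=> db J cJ /(_ (cseq a) erefl) Ja; apply: dominated_in.
Qed.

Lemma dominated_tensor b g : dominated (cseq (tensor (cseq a) (cseq a))) ->
  dominated b -> dominated g -> dominated (cseq (tensor b g)).
Proof.
move=> [nT [m0 [K0 [m00 K00 HT]]]] [nb [m1 [K1 [m10 K10 Hb]]]] [ng [m2 [K2 [m20 K20 Hg]]]].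
have M0 : (0 < m1 * m2 * m0)%N by rewrite !muln_gt0 m10 m20 m00.
have KK : 0 < K1 * K2 * K0 by rewrite !mulr_gt0.
have Hbg n : tensor b g n <= K1 * K2 * K0 * a (n %/ (m1 * m2 * m0)).
  apply: le_trans (tensor_bound nb ng m10 m20 K10 K20 Hb Hg n) _.
  rewrite -!mulrA !ler_wpM2l ?(ltW K10) ?(ltW K20) // (divnMA n (m1 * m2) m0).
  by rewrite -(rearr_tensor _ null_a null_a); apply: HT.
split; first by apply: (null_seq_dominated M0 KK) => n; rewrite nc_cseq ?tensor_ge0.
by exists (m1 * m2 * m0)%N, (K1 * K2 * K0); split => // n; rewrite rearr_tensor.
Qed.

Lemma dominated_unit_seq : 0 < a 0%N -> dominated unit_seq.
Proof.
move=> a0_gt0; split; first exact: null_unit_seq.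
exists 1%N, (a 0%N)^-1; split; rewrite ?invr_gt0 // => n.
rewrite divn1 rearr_cseq => [|i|i j ij].
- by case: n => [|n] /=; rewrite ?mulVf ?gt_eqF // mulr_ge0 ?invr_ge0 ?a_ge0 ?(ltW a0_gt0).
- exact: ler0n.
- by case: j ij => [|j] /=; [rewrite leqn0 => /eqP -> | rewrite ler0n].
Qed.

Lemma a_in_tensor_hull (S : set (nat -> C)) : calkin S ->
  (forall b g, dominated b -> dominated g -> S (cseq (tensor b g))) -> S (cseq a).
Proof.
move=> cS ST; case: (cS) => S0 _ _ _ Hsol.
have [a0_eq0|a0_neq0] := eqVneq (a 0%N) 0.
  have -> : cseq a = (fun _ => 0); last exact: S0.
  apply: funext => n; apply/eqP; rewrite /cseq /= eq_complex /= eqxx andbT.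
  by rewrite eq_le a_ge0 -a0_eq0 a_nonincr.
have a0_gt0 : 0 < a 0%N by rewrite lt_def a0_neq0 a_ge0.
apply: (Hsol _ _ (ST _ _ dominated_a (dominated_unit_seq a0_gt0)) null_a) => n.
rewrite rearr_tensor; [exact: rearr_le_tensor_unit null_a | exact: null_a | exact: null_unit_seq].
Qed.

Lemma principal_stable : principal (cseq a) (cseq (tensor (cseq a) (cseq a))) ->
  stable (principal (cseq a)).
Proof.
move=> /principal_dominated aa_dom; rewrite /stable.
set Ts := [set h | _].
have Ts_dom : Ts `<=` dominated.
  move=> _ [b [g [/principal_dominated db /principal_dominated dg ->]]].
  exact: dominated_tensor.
have cTs : calkin (calkin_hull Ts) by apply: hull_calkin => x /Ts_dom [].
apply/seteqP; split.
  apply: hull_min => [|x /Ts_dom /principal_dominated //].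
  by apply: hull_calkin => _ ->; exact: null_a.
move=> x /principal_dominated dx; apply: (dominated_in cTs) dx.
apply: a_in_tensor_hull cTs _ => b g db dg; apply: hull_sub.
by exists b, g; split => //; apply/principal_dominated.
Qed.

End Dominated.

Section Geometric.
Variables (R : realType) (w : R).
Hypothesis w01 : 0 < w < 1.

Lemma expr_lt_exists (t : R) : 0 < t -> exists n, w ^+ n < t.
Proof.
have [w0 w1] := andP w01; move=> t0; pose u := w^-1 - 1.
have u0 : 0 < u by rewrite subr_gt0 invf_gt1.
have bernoulli n : 1 + n%:R * u <= (1 + u) ^+ n.
  elim: n => [|n IH]; first by rewrite mul0r addr0 expr0.
  rewrite exprS; apply: le_trans (ler_wpM2l (addr_ge0 ler01 (ltW u0)) IH).
  have : 0 <= n%:R * u ^+ 2 by rewrite mulr_ge0 ?ler0n ?sqr_ge0.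
  by rewrite -[n.+1]addn1 natrD; nra.
have [n nP] : exists n, (t * u)^-1 < n%:R.
  by exists (Num.Def.archi_bound (t * u)^-1); rewrite archi_boundP // invr_ge0 ltW ?mulr_gt0.
exists n; have wn : 0 < w ^+ n by rewrite exprn_gt0.
have : (t * u)^-1 * u < (1 + u) ^+ n.
  apply: lt_le_trans (bernoulli n); rewrite -(ltr_pM2r u0) in nP.
  by apply: lt_le_trans nP _; rewrite lerDr.
rewrite addrC subrK exprVn invfM mulfVK ?gt_eqF //.
by rewrite ltf_pV2 ?posrE.
Qed.

Lemma expr_bracket (t : R) : 0 < t <= 1 -> exists n, w ^+ n.+1 < t <= w ^+ n.
Proof.
move=> /andP[t0 t1]; have ex : exists n, w ^+ n < t by apply: expr_lt_exists.
case: (ex_minnP ex) => -[|n] wn min_n; first by move: wn; rewrite expr0 ltNge t1.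
by exists n; rewrite wn leNgt; apply/negP => /min_n; rewrite ltnn.
Qed.

End Geometric.

Definition antidiag n : seq (nat * nat) := [seq (j, i - j) | i <- iota 0 n.+1, j <- iota 0 i.+1]%N.

Lemma mem_antidiag n p : (p \in antidiag n) = (p.1 + p.2 <= n)%N.
Proof.
apply/allpairsPdep/idP => [[i [j [+ + ->]]]|pn].
  by rewrite !mem_iota /=; lia.
by exists (p.1 + p.2)%N, p.1; rewrite !mem_iota addKn; case: p pn => /= *; split => //; lia.
Qed.

Lemma antidiag_uniq n : uniq (antidiag n).
Proof.
apply: allpairs_uniq_dep => [|i _|]; rewrite ?iota_uniq //.
move=> _ _ /allpairsPdep [i [j [_ + ->]]] /allpairsPdep [k [l [_ + ->]]].
rewrite !mem_iota /= => hj hl [ej ei]; move: hj ei; rewrite ej => hl' ei.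
by have -> : i = k by lia.
Qed.

Section Counting.
Variable R : realType.
Variables (a : nat -> R) (w : R).
Hypothesis a_ge0 : forall n, 0 <= a n.
Hypothesis a_nonincr : {homo a : n m / (n <= m)%N >-> m <= n}.
Hypothesis a_null : forall e : R, 0 < e -> exists N : nat, forall n, (N <= n)%N -> a n < e.
Hypothesis a0_le1 : a 0%N <= 1.
Hypothesis w01 : 0 < w < 1.

Let w_gt0 : 0 < w. Proof. by case/andP: w01. Qed.
Let w_lt1 : w < 1. Proof. by case/andP: w01. Qed.

Lemma a_le1 n : a n <= 1.
Proof. exact: le_trans (a_nonincr (leq0n n)) a0_le1. Qed.

Lemma a_below_expr j : exists m, a m <= w ^+ j.
Proof. by have [N HN] := a_null (exprn_gt0 j w_gt0); exists N; apply/ltW/HN. Qed.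

Definition cnt_above j : nat := ex_minn (a_below_expr j).

Lemma cnt_aboveE j x : (x < cnt_above j)%N = (w ^+ j < a x).
Proof.
rewrite /cnt_above; case: ex_minnP => c hc hmin; apply/idP/idP => h.
  by rewrite ltNge; apply/negP => /hmin; rewrite leqNgt h.
by rewrite ltnNge; apply/negP => /a_nonincr /le_trans /(_ hc); rewrite leNgt h.
Qed.

Lemma cnt_above0 : cnt_above 0 = 0%N.
Proof. by apply/eqP; rewrite -leqn0 leqNgt cnt_aboveE expr0 ltNge a0_le1. Qed.

Lemma cnt_above_mono : {homo cnt_above : j k / (j <= k)%N}.
Proof.
move=> j k jk; rewrite leqNgt cnt_aboveE; apply/negP.
move=> /(le_lt_trans (ler_wiXn2l (ltW w_gt0) (ltW w_lt1) jk)).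
by rewrite -cnt_aboveE ltnn.
Qed.

Definition block p := iota (cnt_above p) (cnt_above p.+1 - cnt_above p).

Lemma mem_block p x : (x \in block p) = (w ^+ p.+1 < a x <= w ^+ p).
Proof.
rewrite mem_iota subnKC ?cnt_above_mono // andbC cnt_aboveE leqNgt cnt_aboveE.
by rewrite -leNgt.
Qed.

Lemma Kw_block p : Kw w a p = size (block p).
Proof.
rewrite /Kw size_iota (_ : [set m | _] = [set` [fset x in block p]%fset]).
  by rewrite set_fsetK card_fseq undup_id ?iota_uniq // size_iota.
by apply/seteqP; split => x /=; rewrite !inE mem_block.
Qed.

Lemma Kwt_cnt_above n : Kwt w a n = cnt_above n.+1.
Proof.
rewrite /Kwt; under eq_bigr do rewrite Kw_block size_iota.
rewrite -(big_mkord xpredT (fun i => cnt_above i.+1 - cnt_above i)%N).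
by rewrite telescope_sumn ?cnt_above0 ?subn0 // => x y; apply: cnt_above_mono.
Qed.

Definition level_pairs n : seq (nat * nat) :=
  [seq xy | pq <- antidiag n, xy <- [seq (x, y) | x <- block pq.1, y <- block pq.2]].

Lemma size_level_pairs n : size (level_pairs n) = Mwt w a n.
Proof.
rewrite size_allpairs_dep sumnE big_map big_allpairs_dep /Mwt /Mw.
have iotaE m : iota 0 m = index_iota 0 m by rewrite /index_iota subn0.
rewrite iotaE big_mkord; apply: eq_bigr => i _; rewrite iotaE big_mkord.
by apply: eq_bigr => j _; rewrite size_allpairs -!Kw_block.
Qed.

Lemma block_inj x p q : x \in block p -> x \in block q -> p = q.
Proof.
have lt_expr i j : w ^+ i.+1 < w ^+ j -> (j <= i)%N.
  by rewrite ltr_iXn2l // ltnS.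
rewrite !mem_block => /andP[hp1 hp2] /andP[hq1 hq2]; apply/eqP; rewrite eqn_leq.
by rewrite !lt_expr // ?(lt_le_trans hp1 hq2) ?(lt_le_trans hq1 hp2).
Qed.

Lemma level_pairs_uniq n : uniq (level_pairs n).
Proof.
apply: allpairs_uniq_dep => [|pq _|]; first exact: antidiag_uniq.
  by apply: allpairs_uniq; rewrite ?iota_uniq // => -[? ?] [? ?] _ _ /= [-> ->].
move=> _ _ /allpairsPdep [[p q] [xy [_ + ->]]] /allpairsPdep [[p' q'] [xy' [_ + ->]]] /=.
move=> /allpairsP [[x y] [xp yq ->]] /allpairsP [[x' y'] [xp' yq' ->]] /= [ex ey].
move: xp yq; rewrite ex ey /= => xp yq.
by rewrite (block_inj xp xp') (block_inj yq yq').
Qed.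

Lemma level_pairs_gt n x y : (x, y) \in level_pairs n -> w ^+ n.+2 < a x * a y.
Proof.
move=> /allpairsPdep [[p q] [_ [+ /allpairsP [[x' y'] [xp yq ->]]] [-> ->]]].
rewrite mem_antidiag /= => pqn; move: xp yq; rewrite !mem_block => /andP[hx _] /andP[hy _].
apply: le_lt_trans (ltr_pM (exprn_ge0 _ (ltW w_gt0)) (exprn_ge0 _ (ltW w_gt0)) hx hy).
by rewrite -exprD ler_wiXn2l ?(ltW w_gt0) ?(ltW w_lt1) // !addnS !ltnS.
Qed.

Lemma in_level_pairs n x y : w ^+ n.+1 < a x * a y -> (x, y) \in level_pairs n.
Proof.
move=> h; have wn := exprn_gt0 n.+1 w_gt0.
have in_block z : w ^+ n.+1 < a z -> exists p, [/\ z \in block p & a z <= w ^+ p].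
  move=> /(lt_trans wn) az0; have : 0 < a z <= 1 by rewrite az0 a_le1.
  by move=> /(expr_bracket w01) [p /andP[hp1 hp2]]; exists p; rewrite mem_block hp1 hp2.
have [p [xp ax]] : exists p, [/\ x \in block p & a x <= w ^+ p].
  by apply: in_block; apply: lt_le_trans h _; rewrite ler_piMr ?a_le1.
have [q [yq ay]] : exists q, [/\ y \in block q & a y <= w ^+ q].
  by apply: in_block; apply: lt_le_trans h _; rewrite ler_piMl ?a_le1.
have pqn : (p + q <= n)%N.
  have := lt_le_trans h (ler_pM (a_ge0 _) (a_ge0 _) ax ay).
  by rewrite -exprD ltr_iXn2l // ltnS.
apply/allpairsPdep; exists (p, q), (x, y); split => //; first by rewrite mem_antidiag.
by apply/allpairsP; exists (x, y).
Qed.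

Lemma tensor_fun_le1 p : tensor_fun (cseq a) (cseq a) p <= 1.
Proof. by rewrite /tensor_fun !nc_cseq // mulr_ile1 ?a_le1. Qed.

Lemma tensor_gt_of_lt_Mwt k n : (k < Mwt w a n)%N -> w ^+ n.+2 < tensor (cseq a) (cseq a) k.
Proof.
rewrite -size_level_pairs => kn; apply: (exceeds_drearr_gt tensor_fun_le1).
exists (take k.+1 (level_pairs n)); split.
- exact/take_uniq/level_pairs_uniq.
- by rewrite size_take_min; apply/minn_idPl.
- by move=> [x y] /mem_take /level_pairs_gt; rewrite /tensor_fun !nc_cseq.
Qed.

Lemma tensor_le_of_Mwt_le k n : (Mwt w a n <= k)%N -> tensor (cseq a) (cseq a) k <= w ^+ n.+1.
Proof.
move=> nk; apply: drearr_le => [|[s [us ss Hs]]]; first exact/exprn_ge0/ltW.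
suff : (size s <= Mwt w a n)%N by rewrite ss ltnNge nk.
rewrite -size_level_pairs; apply: uniq_leq_size => // -[x y] /Hs.
by rewrite !nc_cseq //; apply: in_level_pairs.
Qed.

Let null_cseq_a : null_seq (cseq a) := null_a a_ge0 a_null.

Lemma Mwt_bound_of_dominated : dominated a (cseq (tensor (cseq a) (cseq a))) ->
  exists (r : nat) (C : R), 0 < C /\
    forall n : nat, (Mwt w a n)%:R <= C * (Kwt w a (n + r))%:R.
Proof.
move=> [_ [m [K [m0 K0 HT]]]].
have [c Kwc] : exists c, K * w ^+ c <= 1.
  have [c wc] : exists c, w ^+ c < K^-1 by apply: expr_lt_exists; rewrite ?invr_gt0.
  by exists c; rewrite -ler_pdivlMl // mulr1 ltW.
exists c.+1, m%:R; split=> [|n]; first by rewrite ltr0n.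
case hM : (Mwt w a n) => [|k]; first by rewrite mulr_ge0 ?ler0n.
have := @tensor_gt_of_lt_Mwt k n; rewrite hM => /(_ (ltnSn k)).
rewrite -(rearr_tensor _ null_cseq_a null_cseq_a) => /lt_le_trans /(_ (HT k)) wT.
have : w ^+ (n + c.+1).+1 < a (k %/ m).
  rewrite -(ltr_pM2l K0); apply: le_lt_trans wT.
  have -> : (n + c.+1).+1 = (n.+2 + c)%N by rewrite addnS !addSn.
  by rewrite exprD mulrCA ler_piMr ?exprn_ge0 ?(ltW w_gt0).
by rewrite -cnt_aboveE -Kwt_cnt_above ltn_divLR // -natrM ler_nat mulnC.
Qed.

Lemma tensor_le_of_Mwt_bound r (C : R) m k :
  (forall n, (Mwt w a n)%:R <= C * (Kwt w a (n + r))%:R) -> C <= m%:R ->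
  (0 < m)%N -> tensor (cseq a) (cseq a) k <= (w ^+ r.+1)^-1 * a (k %/ m).
Proof.
move=> HM Cm m0; have wr : 0 < w ^+ r.+1 by rewrite exprn_gt0.
have [T0|T_neq0] := eqVneq (tensor (cseq a) (cseq a) k) 0.
  by rewrite T0 mulr_ge0 ?a_ge0 ?invr_ge0 ?ltW.
have : 0 < tensor (cseq a) (cseq a) k <= 1.
  by rewrite lt_def T_neq0 tensor_ge0 drearr_ub // => p; apply: tensor_fun_le1.
move=> /(expr_bracket w01) [n /andP[Tn1 Tn]]; apply: le_trans Tn _.
have kM : (k < Mwt w a n)%N.
  by rewrite ltnNge; apply/negP => /tensor_le_of_Mwt_le; rewrite leNgt Tn1.
have : (k < m * Kwt w a (n + r))%N.
  rewrite -(ler_nat R) natrM (le_trans _ (le_trans (HM n) _)) ?ler_nat //.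
  by rewrite ler_wpM2r ?ler0n.
rewrite mulnC -ltn_divLR // Kwt_cnt_above cnt_aboveE -addSn => /ltW.
have -> : w ^+ n = (w ^+ r.+1)^-1 * w ^+ (n.+1 + r).
  by rewrite addSnnS exprD mulrCA mulVf ?mulr1 ?gt_eqF.
by rewrite ler_pM2l ?invr_gt0.
Qed.

Lemma dominated_of_Mwt_bound : (exists (r : nat) (C : R), 0 < C /\
    forall n : nat, (Mwt w a n)%:R <= C * (Kwt w a (n + r))%:R) ->
  dominated a (cseq (tensor (cseq a) (cseq a))).
Proof.
move=> [r [C [C0 HM]]].
pose m := Num.Def.archi_bound C; have Cm : C < m%:R by rewrite archi_boundP ?ltW.
have m0 : (0 < m)%N by rewrite -(ltr0n R) (lt_trans C0 Cm).
have K0 : 0 < (w ^+ r.+1)^-1 by rewrite invr_gt0 exprn_gt0.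
have HT k := tensor_le_of_Mwt_bound k HM (ltW Cm) m0.
split.
  by apply: (null_seq_dominated a_null m0 K0) => n; rewrite nc_cseq ?tensor_ge0.
by exists m, (w ^+ r.+1)^-1; split => // k; rewrite rearr_tensor.
Qed.

End Counting.

Theorem theorem2p8 (R : realType) (a : nat -> R) (w : R) :
  (forall n, 0 <= a n) ->
  (forall n m, (n <= m)%N -> a m <= a n) ->
  (forall e : R, 0 < e -> exists N : nat, forall n, (N <= n)%N -> a n < e) ->
  a 0%N <= 1 ->
  0 < w < 1 ->
  [/\ (stable (principal (cseq a)) <-> principal (cseq a) (cseq (tensor (cseq a) (cseq a)))),
      (principal (cseq a) (cseq (tensor (cseq a) (cseq a))) <->
         exists (r : nat) (C : R), 0 < C /\
           forall n : nat, ((Mwt w a n)%:R <= C * (Kwt w a (n + r))%:R))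
    & (stable (principal (cseq a)) <->
         exists (r : nat) (C : R), 0 < C /\
           forall n : nat, ((Mwt w a n)%:R <= C * (Kwt w a (n + r))%:R))].
Proof.
move=> a_ge0 a_nonincr a_null a0_le1 w01.
have a_in : principal (cseq a) (cseq a) by apply: hull_sub.
have one_two : stable (principal (cseq a)) <->
    principal (cseq a) (cseq (tensor (cseq a) (cseq a))).
  by split; [move=> st; apply: (stable_tensor st) | apply: principal_stable].
have two_three : principal (cseq a) (cseq (tensor (cseq a) (cseq a))) <->
    exists (r : nat) (C : R), 0 < C /\
      forall n : nat, ((Mwt w a n)%:R <= C * (Kwt w a (n + r))%:R).
  rewrite principal_dominated //; split.
  - exact: Mwt_bound_of_dominated.
  - exact: dominated_of_Mwt_bound.
by split => //; apply: iff_trans one_two two_three.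
Qed.
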